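(* For all integers $t\ge 2$, $\ell\ge2$ and $1\le r\le \ell$ satisfying $\ell<r(r+1)$, the braid graph $B_t=B(\ell,r,t)$ satisfies $m_{B_t}=d_{B_t}$.
   Context: For a graph $G$ with $v_G>1$ vertices and $e_G$ edges, its density is $d_G=\frac{e_G}{v_G-1}$ and its maximum density is $m_G=\max\{d_H: H\subseteq G,\ v_H>1\}$. Two sequences of vertices $(v_1,\dots,v_r)$ and $(u_1,\dots,u_r)$ form an $r$-bridge if for each $i=1,\dots,r$ the vertex $v_i$ is adjacent to all of $u_1,\dots,u_i$. For $t\ge1$, $\ell\ge2$, $1\le r\le\ell$, the braid graph $B(\ell,r,t)$ consists of $t$ vertex-disjoint $\ell$-cliques $K^{(1)}_\ell,\dots,K^{(t)}_\ell$, each with its vertices linearly ordered, where for each $i=1,\dots,t-1$ the last $r$ vertices of $K^{(i)}_\ell$ (in order, as $(v_1,\dots,v_r)$) and the first $r$ vertices of $K^{(i+1)}_\ell$ (in order, as $(u_1,\dots,u_r)$) form an $r$-bridge, and there are no other edges. Thus $d_{B_t}=\frac{t\binom{\ell}{2}+(t-1)\binom{r+1}{2}}{t\ell-1}$. *)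

From HB Require Import structures.
From mathcomp Require Import all_boot all_order all_algebra.
Set Implicit Arguments. Unset Strict Implicit. Unset Printing Implicit Defensive.
Import Order.TTheory GRing.Theory Num.Theory.
Local Open Scope ring_scope.

(* A simple graph on a finite vertex type T is given by a symmetric,
   irreflexive adjacency relation adj.  Its edge set is the set of
   2-element vertex sets {x,y} with adj x y. *)
Definition edges (T : finType) (adj : rel T) : {set {set T}} :=
  [set e : {set T} | [exists x : T, exists y : T, adj x y && (e == [set x; y])]].

Definition is_subgraph (T : finType) (adj : rel T) (S : {set T}) (F : {set {set T}}) : bool :=
  (F \subset edges adj) && [forall e in F, e \subset S].

Definition density (T : finType) (S : {set T}) (F : {set {set T}}) : rat :=
  (#|F|%:R) / ((#|S|.-1)%:R).

Definition density_graph (T : finType) (adj : rel T) : rat :=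
  density [set: T] (edges adj).

(* maximum density m_G = max { d_H : H subgraph of G, v_H > 1 }.
   (All densities are >= 0, so 0 is a neutral start for the max.) *)
Definition max_density (T : finType) (adj : rel T) : rat :=
  \big[Num.max/0]_(H : {set T} * {set {set T}} |
        is_subgraph adj H.1 H.2 && (1 < #|H.1|)%N) density H.1 H.2.

(* Braid graph B(l, r, t): vertices (i, a), i < t the clique index,
   a < l the position in the linear order of clique K^(i) (0-based).
   Bridge between K^(i) and K^(i+1): v_k = (i, l-r+k-1), u_j = (i+1, j-1),
   v_k ~ u_j iff j <= k, i.e. (0-based positions p, q): q + l <= p + r. *)
Definition braid_bridge (l r t : nat) (x y : 'I_t * 'I_l) : bool :=
  ((x.1 : nat).+1 == y.1) && (y.2 + l <= x.2 + r)%N.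

Arguments braid_bridge : clear implicits.

Definition braid_adj (l r t : nat) : rel ('I_t * 'I_l) :=
  fun x y =>
    [|| (x.1 == y.1) && (x.2 != y.2), braid_bridge l r t x y | braid_bridge l r t y x].

Arguments braid_adj : clear implicits.

From HB Require Import structures.
From mathcomp Require Import all_boot all_order all_algebra.
From mathcomp Require Import zify ring lra.
Set Implicit Arguments. Unset Strict Implicit. Unset Printing Implicit Defensive.
Import Order.TTheory GRing.Theory Num.Theory.

(* Let D be the density of B_t and, for a vertex set S, let
   potential S = D |S| - e(S), where e(S) counts the edges induced by S; for
   |S| >= 2 the induced subgraph on S has density at most D exactly when
   potential S >= D.  Take a nonempty S of minimal potential, of largest size
   among the minimisers.  Adding a vertex z must raise the potential and
   removing a vertex z' must not lower it, so z has fewer neighbours in S than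
   z' has in S - z'.  But if z' and z sit at adjacent positions of one clique,
   z sees z' and every neighbour of z' except at most one bridge vertex.
   Hence S is a union of k whole cliques, with P <= k - 1 consecutive pairs,
   and has k C(l,2) + P C(r+1,2) edges.  Comparing with B_t itself (k = t,
   P = t - 1), the density of S is at most D because 2 C(r+1,2) = r(r+1) >= l. *)

Section InducedEdges.
Variables (T : finType) (adj : rel T).

Definition induced_edges (S : {set T}) := [set e in edges adj | e \subset S].

Definition nbhd (S : {set T}) (z : T) := [set u in S | adj z u].

Lemma mem_induced_edges (S : {set T}) e : (e \in induced_edges S) =
  [exists x, exists y, [&& adj x y, x \in S, y \in S & e == [set x; y]]].
Proof.
rewrite !inE; apply/andP/existsP.
  case=> /existsP[x /existsP[y /andP[axy /eqP->]]]; rewrite subUset !sub1set.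
  by case/andP=> xS yS; exists x; apply/existsP; exists y; rewrite axy xS yS eqxx.
case=> x /existsP[y /and4P[axy xS yS /eqP->]]; rewrite subUset !sub1set xS yS.
by split=> //; apply/existsP; exists x; apply/existsP; exists y; rewrite axy eqxx.
Qed.

Lemma induced_edges0 : induced_edges set0 = set0.
Proof.
apply/setP=> e; rewrite mem_induced_edges inE.
by apply/existsP=> -[x /existsP[y /and4P[_]]]; rewrite inE.
Qed.

Hypotheses (adjC : symmetric adj) (adj_irr : irreflexive adj).

Lemma induced_edgesU1 (S : {set T}) z : z \notin S ->
  induced_edges (z |: S) = induced_edges S :|: [set [set z; u] | u in nbhd S z].
Proof.
move=> zS; apply/setP=> e; rewrite in_setU !mem_induced_edges; apply/idP/orP.
  case/existsP=> x /existsP[y /and4P[axy]]; rewrite !inE => xS yS /eqP->.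
  have [xz|/negPf xz] := eqVneq x z.
    have [yz|/negPf yz] := eqVneq y z; first by rewrite xz yz adj_irr in axy.
    right; apply/imsetP; exists y; last by rewrite xz.
    by rewrite inE -xz axy andbT; move: yS; rewrite yz.
  have [yz|/negPf yz] := eqVneq y z.
    right; apply/imsetP; exists x; last by rewrite yz setUC.
    by rewrite inE -yz adjC axy andbT; move: xS; rewrite xz.
  rewrite xz yz /= in xS yS.
  by left; apply/existsP; exists x; apply/existsP; exists y; rewrite axy xS yS eqxx.
case=> [/existsP[x /existsP[y /and4P[axy xS yS eE]]]|/imsetP[u]].
  by apply/existsP; exists x; apply/existsP; exists y; rewrite !inE axy xS yS eE !orbT.
rewrite inE => /andP[uS azu] ->.
by apply/existsP; exists z; apply/existsP; exists u; rewrite !inE azu !eqxx uS orbT.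
Qed.

Lemma card_induced_edgesU1 (S : {set T}) z : z \notin S ->
  #|induced_edges (z |: S)| = (#|induced_edges S| + #|nbhd S z|)%N.
Proof.
move=> zS; rewrite induced_edgesU1 // cardsU card_in_imset; last first.
  move=> u1 u2; rewrite !inE => /andP[u1S _] _ eu.
  have : u1 \in [set z; u2] by rewrite -eu !inE eqxx orbT.
  by rewrite !inE => /predU1P[u1z|/eqP//]; rewrite -u1z u1S in zS.
suff -> : induced_edges S :&: [set [set z; u] | u in nbhd S z] = set0.
  by rewrite cards0 subn0.
apply/setP=> e; rewrite !inE; apply/andP=> -[/andP[_ eS] /imsetP[u _ eE]].
by move/subsetP: eS => /(_ z); rewrite eE !inE eqxx (negPf zS) => /(_ isT).
Qed.

Lemma card_induced_edges_by_key (key : T -> nat) (S : {set T}) : injective key ->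
  #|induced_edges S| = (\sum_(v in S) #|nbhd [set u in S | key u < key v] v|)%N.
Proof.
move=> key_inj; have [n] := ubnP #|S|; elim: n S => // n IH S.
have [->|[x0 x0S]] := set_0Vmem S => [_|].
  by rewrite induced_edges0 big_set0 cards0.
have [v vS vmax] := @arg_maxnP _ x0 (mem S) key x0S.
have {}vS : v \in S := vS; have {}vmax u : u \in S -> key u <= key v := vmax u.
rewrite (cardsD1 v) vS add1n ltnS => leSn.
have earlier_v : [set u in S | key u < key v] = S :\ v.
  apply/setP=> u; rewrite !inE; have [->|uv] /= := eqVneq u v; first by rewrite ltnn andbF.
  case uS: (u \in S) => //=; rewrite ltn_neqAle vmax // andbT.
  by apply: contra_neq uv; apply: key_inj.
rewrite -{1}(setD1K vS) card_induced_edgesU1 ?setD11 // IH //.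
rewrite (big_setD1 v vS) addnC earlier_v; congr (_ + _)%N.
apply: eq_bigr => u /setD1P[uv uS]; congr #|nbhd _ u|; apply/setP=> w; rewrite !inE.
by have [->|] //= := eqVneq w v; rewrite ltnNge vmax ?andbF.
Qed.

Local Open Scope ring_scope.

Variable D : rat.

Definition potential (S : {set T}) : rat := D * #|S|%:R - #|induced_edges S|%:R.

Lemma potentialU1 (S : {set T}) z : z \notin S ->
  potential (z |: S) = potential S + D - #|nbhd S z|%:R.
Proof.
by move=> zS; rewrite /potential card_induced_edgesU1 // cardsU1 zS add1n -addn1 !natrD; ring.
Qed.

Lemma potential1 x : potential [set x] = D.
Proof.
rewrite -[[set x]]setU0 potentialU1 ?inE // /potential induced_edges0 !cards0.
suff -> : nbhd set0 x = set0 by rewrite cards0; ring.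
by apply/setP=> u; rewrite !inE.
Qed.

Lemma density_le_potential (S : {set T}) : (1 < #|S|)%N ->
  (density S (induced_edges S) <= D) = (D <= potential S).
Proof.
move=> S_gt1; have S_pos : (0 < #|S|.-1)%N by rewrite -subn1 subn_gt0.
rewrite /density ler_pdivrMr ?ltr0n // -subn1 natrB; last exact: ltnW.
by rewrite /potential mulrBr mulr1; apply/idP/idP => ?; lra.
Qed.

Lemma exists_stable_potential_minimizer (x0 : T) : exists S : {set T},
  [/\ S != set0, forall S', S' != set0 -> potential S <= potential S' &
      forall z' z, z' \in S -> z \notin S -> (1 < #|S|)%N ->
      (#|nbhd S z| < #|nbhd (S :\ z') z'|)%N].
Proof.
pose nonempty (S : {set T}) := S != set0.
have setT_nonempty : nonempty [set: T] by apply/set0Pn; exists x0.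
have [S1 S1n S1min] := arg_minP potential setT_nonempty.
pose minimizer S := nonempty S && (potential S == potential S1).
have S1_minimizer : minimizer S1 by rewrite /minimizer S1n eqxx.
have [S /andP[Sn /eqP SS1] Smax] := @arg_maxnP _ S1 minimizer (fun S => #|S|) S1_minimizer.
have Smin S' : nonempty S' -> potential S <= potential S' by rewrite SS1; apply: S1min.
exists S; split=> // z' z z'S zS S_gt1.
have grow : potential S < potential (z |: S).
  have zSn : nonempty (z |: S) by apply/set0Pn; exists z; rewrite setU11.
  rewrite lt_neqAle Smin // andbT; apply: contraTneq (leqnn #|S|) => eqS.
  have /Smax : minimizer (z |: S) by rewrite /minimizer zSn -eqS SS1 eqxx.
  by rewrite cardsU1 zS -ltnNge.
have shrink : potential S <= potential (S :\ z').
  by apply: Smin; rewrite /nonempty -card_gt0; move: S_gt1; rewrite (cardsD1 z') z'S.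
rewrite -{1}(setD1K z'S) potentialU1 ?setD11 // in shrink.
rewrite potentialU1 // in grow.
rewrite -(ltr_nat rat); lra.
Qed.

End InducedEdges.

Local Open Scope ring_scope.

Lemma max_density_induced (T : finType) (adj : rel T) : (1 < #|T|)%N ->
  (forall S : {set T}, (1 < #|S|)%N ->
     density S (induced_edges adj S) <= density_graph adj) ->
  max_density adj = density_graph adj.
Proof.
move=> T_gt1 induced_le.
have whole : is_subgraph adj [set: T] (edges adj) && (1 < #|[set: T]|)%N.
  by rewrite /is_subgraph subxx cardsT T_gt1 andbT; apply/forall_inP => e _; apply: subsetT.
have density_ge0 (S : {set T}) (F : {set {set T}}) : 0 <= density S F.
  exact: divr_ge0.
rewrite /max_density (bigD1 (_, _) whole) /= max_l //.
apply: (big_ind (fun x => x <= density_graph adj)) => [|x y|[S F]].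
- exact: density_ge0.
- by rewrite ge_max => -> ->.
- move=> /andP[/andP[/andP[F_edges F_in] S_gt1] _]; rewrite /=.
  apply: le_trans (induced_le S S_gt1); rewrite ler_wpM2r ?invr_ge0 // ler_nat.
  apply/subset_leq_card/subsetP => e eF; rewrite inE (subsetP F_edges) //=.
  exact: (forall_inP F_in).
Qed.

Local Close Scope ring_scope.

Lemma card_ord_lt n p : #|[set q : 'I_n | q < p]| = minn p n.
Proof.
have mn : minn p n <= n by apply: geq_minr.
have widen_inj : injective (widen_ord mn) by move=> i j [] /val_inj.
rewrite -[RHS](card_ord (minn p n)) -cardsT -(card_imset _ widen_inj).
apply: eq_card => q; rewrite inE; apply/idP/imsetP => [qp|[i _ ->]] /=.
  have qmin : q < minn p n by rewrite leq_min qp ltn_ord.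
  by exists (Ordinal qmin); last by apply: val_inj.
by have := ltn_ord i; rewrite leq_min => /andP[].
Qed.

Lemma card_ord_ge n p : #|[set q : 'I_n | p <= q]| = n - p.
Proof.
have -> : [set q : 'I_n | p <= q] = ~: [set q : 'I_n | q < p].
  by apply/setP=> q; rewrite !inE -leqNgt.
by have := cardsC [set q : 'I_n | q < p]; rewrite card_ord card_ord_lt; lia.
Qed.

Lemma bin2_mul2 n : 'C(n, 2) * 2 = n * n.-1.
Proof. by elim: n => // n IH; rewrite binS bin1 mulnDl IH; case: n {IH} => //= n; lia. Qed.

Lemma sum_ord_subn n r : r <= n -> \sum_(q < n) (r - q) = 'C(r.+1, 2).
Proof.
move=> rn; rewrite -(subnKC rn) big_split_ord /= [X in _ + X]big1 ?addn0; last first.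
  by move=> i _; apply/eqP; rewrite subn_eq0 leq_addr.
rewrite -bin2_sum big_mkord big_ord_recl /= add0n.
rewrite (reindex_inj rev_ord_inj) /=; apply: eq_bigr => i _.
by rewrite /bump leq0n add1n; have := ltn_ord i; lia.
Qed.

Lemma setX_of_shift_closed t l (S : {set 'I_t * 'I_l}) :
  (forall i (p q : 'I_l), (p : nat).+1 = q -> ((i, p) \in S) = ((i, q) \in S)) ->
  S = setX (fst @: S) setT.
Proof.
move=> shift.
have shift_by i n (p q : 'I_l) : p + n = q :> nat -> ((i, p) \in S) = ((i, q) \in S).
  elim: n q => [|n IH] q; first by rewrite addn0 => /val_inj->.
  move=> pnq; have pn_lt : p + n < l by have := ltn_ord q; lia.
  by rewrite (IH (Ordinal pn_lt)) // (shift _ _ q) //= -pnq addnS.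
have any_position i (p q : 'I_l) : ((i, p) \in S) = ((i, q) \in S).
  have [pq|qp] := leqP p q; first by apply: (shift_by i (q - p)); rewrite subnKC.
  by symmetry; apply: (shift_by i (p - q)); rewrite subnKC // ltnW.
apply/setP=> -[i p]; rewrite in_setX in_setT andbT; apply/idP/imsetP.
  by move=> ipS; exists (i, p).
by case=> -[j q] jqS /= ->; rewrite (any_position j p q).
Qed.

Definition prevs t (I : {set 'I_t}) (i : 'I_t) := [set j in I | (j : nat).+1 == i].

Lemma card_prevs_le1 t (I : {set 'I_t}) i : #|prevs I i| <= 1.
Proof.
apply/card_le1_eqP => j1 j2; rewrite !inE => /andP[_ /eqP h1] /andP[_ /eqP h2].
by apply: val_inj => /=; lia.
Qed.

Lemma sum_prevs_lt t (I : {set 'I_t}) : I != set0 -> \sum_(i in I) #|prevs I i| < #|I|.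
Proof.
case/set0Pn=> i0 i0I; have [m mI mmin] := @arg_minnP _ i0 (mem I) val i0I.
have {}mI : m \in I := mI.
rewrite (big_setD1 m mI) (cardsD1 m I) mI.
have -> : prevs I m = set0.
  apply/setP=> j; rewrite !inE; apply/negbTE/andP => -[jI /eqP jm].
  by have := mmin j jI; rewrite /= -jm ltnn.
rewrite cards0 /= add0n add1n ltnS -sum1_card.
by apply: leq_sum => i _; apply: card_prevs_le1.
Qed.

Lemma sum_prevs_setT t : \sum_(i in [set: 'I_t]) #|prevs [set: 'I_t] i| = t.-1.
Proof.
rewrite (eq_bigl xpredT) => [|i]; last by rewrite inE.
case: t => [|t]; first by rewrite big_ord0.
rewrite big_ord_recl /=.
have -> : prevs [set: 'I_t.+1] ord0 = set0 by apply/setP=> j; rewrite !inE.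
rewrite cards0 add0n -[RHS](card_ord t) -sum1_card.
apply: eq_bigr => i _; apply/eqP; rewrite eqn_leq card_prevs_le1 card_gt0.
by apply/set0Pn; exists (widen_ord (leqnSn t) i); rewrite !inE /= /bump leq0n add1n.
Qed.

Local Open Scope ring_scope.

Lemma clique_union_density_le (t k l A B P : nat) :
  (1 <= k <= t)%N -> (2 <= l)%N -> (P <= k.-1)%N -> (A * 2 = l * l.-1)%N -> (l <= B * 2)%N ->
  (k * A + P * B)%:R / (k * l).-1%:R <= (t * A + t.-1 * B)%:R / (t * l).-1%:R :> rat.
Proof.
move=> /andP[k_ge1 kt] l_ge2 Pk A2 lB.
have pred_mulE m : (0 < m)%N -> (m * l).-1%:R = m%:R * l%:R - 1 :> rat.
  by move=> m_gt0; rewrite -subn1 natrB ?natrM // muln_gt0 m_gt0; lia.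
have t_gt0 : (0 < t)%N by lia.
have den_gt0 m : (0 < m)%N -> 0 < (m * l).-1%:R :> rat.
  by move=> m_gt0; rewrite ltr0n; nia.
rewrite ler_pdivrMr ?den_gt0 // mulrAC ler_pdivlMr ?den_gt0 //.
rewrite !pred_mulE // -!subn1 !natrD !natrM !natrB //.
have A2' : A%:R * 2 = l%:R * (l%:R - 1) :> rat.
  by have := congr1 (fun n => n%:R : rat) A2; rewrite /= !natrM -subn1 natrB //; lia.
have lB' : l%:R <= B%:R * 2 :> rat by rewrite -(natrM _ B 2) ler_nat.
have Pk' : P%:R <= k%:R - 1 :> rat by rewrite -[1]/(1%:R) -natrB // ler_nat; lia.
have kt' : k%:R <= t%:R :> rat by rewrite ler_nat.
have l_ge2' : 2 <= l%:R :> rat by rewrite ler_nat.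
have k_ge1' : 1 <= k%:R :> rat by rewrite ler1n.
have slack : 0 <= (l%:R - 1) * B%:R - A%:R :> rat.
  have : 0 <= (l%:R - 1) * (B%:R * 2 - l%:R) :> rat by apply: mulr_ge0; lra.
  suff -> : (l%:R - 1) * (B%:R * 2 - l%:R) = ((l%:R - 1) * B%:R - A%:R) * 2 :> rat by lra.
  by rewrite [RHS]mulrBl A2'; ring.
have fewer_bridges :
    P%:R * B%:R * (t%:R * l%:R - 1) <= (k%:R - 1) * B%:R * (t%:R * l%:R - 1) :> rat.
  by rewrite ler_wpM2r ?ler_wpM2r //; nra.
have gap : (t%:R * A%:R + (t%:R - 1) * B%:R) * (k%:R * l%:R - 1)
    - (k%:R * A%:R + (k%:R - 1) * B%:R) * (t%:R * l%:R - 1)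
  = (t%:R - k%:R) * ((l%:R - 1) * B%:R - A%:R) :> rat by ring.
have : 0 <= (t%:R - k%:R) * ((l%:R - 1) * B%:R - A%:R) :> rat by apply: mulr_ge0; lra.
rewrite -gap; lra.
Qed.

Local Close Scope ring_scope.

Section Braid.
Variables t l r : nat.
Local Notation vertex := ('I_t * 'I_l)%type.
Local Notation adj := (braid_adj l r t).

Lemma braid_adjE (x y : vertex) : adj x y =
  [|| (x.1 == y.1 :> nat) && (x.2 != y.2 :> nat),
      ((x.1 : nat).+1 == y.1) && (y.2 + l <= x.2 + r)
    | ((y.1 : nat).+1 == x.1) && (x.2 + l <= y.2 + r)].
Proof. by []. Qed.

Lemma braid_adjC : symmetric adj.
Proof. by move=> x y; rewrite !braid_adjE; lia. Qed.

Lemma braid_adj_irr : irreflexive adj.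
Proof. by move=> x; rewrite braid_adjE; lia. Qed.

Lemma vertex_eqE (x y : vertex) : (x == y) = (x.1 == y.1 :> nat) && (x.2 == y.2 :> nat).
Proof. by case: x y => [a b] [c d]; rewrite xpair_eqE. Qed.

Lemma braid_lost_neighbour (z z' u : vertex) :
  z.1 = z'.1 -> u != z -> adj z' u -> ~~ adj z u ->
  ((u.1 : nat) = (z.1 : nat).+1 /\ z.2 + r < u.2 + l <= z'.2 + r) \/
  ((u.1 : nat).+1 = z.1 /\ u.2 + r < z.2 + l /\ z'.2 + l <= u.2 + r).
Proof.
move=> /(congr1 (@nat_of_ord t)) zz'; rewrite vertex_eqE !braid_adjE; lia.
Qed.

Lemma braid_lost_neighbour_unique (z z' u1 u2 : vertex) :
  z.1 = z'.1 -> (z.2 : nat).+1 = z'.2 \/ (z'.2 : nat).+1 = z.2 ->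
  u1 != z -> u2 != z -> adj z' u1 -> ~~ adj z u1 -> adj z' u2 -> ~~ adj z u2 ->
  u1 = u2.
Proof.
move=> zz' zz'_next u1z u2z a1 n1 a2 n2.
have := braid_lost_neighbour zz' u1z a1 n1; have := braid_lost_neighbour zz' u2z a2 n2.
by move=> lost2 lost1; apply/eqP; rewrite vertex_eqE; lia.
Qed.

Lemma braid_nbhd_shift (S : {set vertex}) (z z' : vertex) :
  z' \in S -> z \notin S -> z.1 = z'.1 -> (z.2 : nat).+1 = z'.2 \/ (z'.2 : nat).+1 = z.2 ->
  #|nbhd adj (S :\ z') z'| <= #|nbhd adj S z|.
Proof.
move=> z'S zS zz' zz'_next.
set lost := [set u in nbhd adj (S :\ z') z' | ~~ adj z u].
have lost_le1 : #|lost| <= 1.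
  apply/card_le1_eqP => u1 u2; rewrite !inE.
  move=> /andP[/andP[/andP[_ u1S] a1] n1] /andP[/andP[/andP[_ u2S] a2] n2].
  have uz u : u \in S -> u != z by apply: contraTneq => ->.
  exact: (braid_lost_neighbour_unique zz' zz'_next (uz _ u2S) (uz _ u1S) a2 n2 a1 n1).
have z'_nbhd : z' \in nbhd adj S z.
  by rewrite inE z'S braid_adjE; move/(congr1 (@nat_of_ord t)): zz'; lia.
have sub : nbhd adj (S :\ z') z' \subset (nbhd adj S z :\ z') :|: lost.
  apply/subsetP => u; rewrite !inE => /andP[/andP[uz' uS] a].
  by case: (boolP (adj z u)) => H; rewrite ?uz' ?uS ?a ?H.
apply: leq_trans (subset_leq_card sub) _; rewrite cardsU (cardsD1 z' (nbhd _ _ _)) z'_nbhd.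
by move: lost_le1; lia.
Qed.

Definition clique_key (v : vertex) := v.1 * l + v.2.

Lemma clique_key_lt (u v : vertex) :
  (clique_key u < clique_key v) = (u.1 < v.1) || (u.1 == v.1 :> nat) && (u.2 < v.2).
Proof.
rewrite /clique_key; case: u v => [a b] [c d] /=.
have := ltn_ord b; have := ltn_ord d.
have [ac|ca|->] := ltngtP a c => /= dl bl; last by rewrite ltn_add2l.
- have : a.+1 * l <= c * l by rewrite leq_mul2r ac orbT.
  by rewrite mulSn; lia.
- have : c.+1 * l <= a * l by rewrite leq_mul2r ca orbT.
  by rewrite mulSn; lia.
Qed.

Lemma clique_key_inj : injective clique_key.
Proof.
move=> u v euv; apply/eqP; rewrite vertex_eqE.
by have := clique_key_lt u v; have := clique_key_lt v u; rewrite euv ltnn; lia.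
Qed.

Hypothesis r_le_l : r <= l.

(* [r - v.2] is truncated: a position [p >= r] has no neighbour in the
   previous clique. *)
Lemma braid_earlier_degree (I : {set 'I_t}) (v : vertex) : v.1 \in I ->
  #|nbhd adj [set u in setX I setT | clique_key u < clique_key v] v| =
  v.2 + #|prevs I v.1| * (r - v.2).
Proof.
case: v => c d /= cI.
have -> : nbhd adj [set u in setX I setT | clique_key u < clique_key (c, d)] (c, d) =
    setX [set c] [set q : 'I_l | q < d] :|: setX (prevs I c) [set q : 'I_l | d + l - r <= q].
  apply/setP=> -[a b]; rewrite !inE clique_key_lt braid_adjE /=.
  have [-> | ac] := eqVneq a c; first by rewrite cI; lia.
  have ac' : (a : nat) != c by [].
  by case: (a \in I); lia.
rewrite cardsU.
have -> : setX [set c] [set q : 'I_l | q < d]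
    :&: setX (prevs I c) [set q : 'I_l | d + l - r <= q] = set0.
  by apply/setP=> -[a b]; rewrite !inE -val_eqE /=; lia.
rewrite cards0 subn0 !cardsX cards1 mul1n card_ord_lt card_ord_ge.
have -> : l - (d + l - r) = r - d by lia.
by rewrite (minn_idPl (ltnW (ltn_ord d))).
Qed.

Lemma card_induced_edges_clique_union (I : {set 'I_t}) :
  #|induced_edges adj (setX I setT)| =
  #|I| * 'C(l, 2) + (\sum_(i in I) #|prevs I i|) * 'C(r.+1, 2).
Proof.
rewrite (card_induced_edges_by_key braid_adjC braid_adj_irr _ clique_key_inj).
transitivity (\sum_(i in I) \sum_(q < l) (q + #|prevs I i| * (r - q))).
  rewrite pair_big_dep; apply: eq_big => [[i q]|v]; first by rewrite !inE andbT.
  by rewrite !inE andbT => /braid_earlier_degree.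
rewrite -(sum_ord_subn r_le_l) -(bin2_sum l) big_mkord -sum_nat_const big_distrl -big_split /=.
by apply: eq_bigr => i _; rewrite big_distrr -big_split.
Qed.

Local Open Scope ring_scope.

Lemma braid_density : density_graph adj =
  (t * 'C(l, 2) + t.-1 * 'C(r.+1, 2))%:R / (t * l).-1%:R.
Proof.
have full : [set: vertex] = setX setT setT by apply/setP=> -[i p]; rewrite !inE.
have edgesE : edges adj = induced_edges adj [set: vertex].
  by apply/setP=> e; rewrite !inE subsetT andbT.
rewrite /density_graph /density edgesE full card_induced_edges_clique_union.
by rewrite sum_prevs_setT cardsX !cardsT !card_ord.
Qed.

Hypotheses (l_ge2 : (2 <= l)%N) (l_le_bridges : (l <= r * r.+1)%N).

Lemma braid_clique_union_density_le (I : {set 'I_t}) : I != set0 ->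
  density (setX I setT) (induced_edges adj (setX I setT)) <= density_graph adj.
Proof.
move=> In; rewrite braid_density /density card_induced_edges_clique_union cardsX cardsT card_ord.
apply: clique_union_density_le => //.
- by rewrite card_gt0 In -[X in (_ <= X)%N](card_ord t) max_card.
- by have := sum_prevs_lt In; lia.
- exact: bin2_mul2.
- by rewrite bin2_mul2 mulnC.
Qed.

Lemma braid_potential_ge (S : {set vertex}) : S != set0 ->
  density_graph adj <= potential adj (density_graph adj) S.
Proof.
move=> Sn; have [x0 _] := set0Pn _ Sn.
have [S0 [S0n S0min S0stable]] :=
  exists_stable_potential_minimizer braid_adjC braid_adj_irr (density_graph adj) x0.
apply: le_trans (S0min S Sn).
have [S0_le1|S0_gt1] := leqP #|S0| 1.
  have /cards1P[x ->] : #|S0| == 1%N by rewrite eqn_leq S0_le1 card_gt0.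
  by rewrite (potential1 braid_adjC braid_adj_irr).
have shift_closed i (p q : 'I_l) : p.+1 = q -> ((i, p) \in S0) = ((i, q) \in S0).
  move=> pq; apply/idP/idP => inS; apply/negPn/negP => notinS.
  - have := S0stable _ _ inS notinS S0_gt1; rewrite ltnNge braid_nbhd_shift //.
    by right.
  - have := S0stable _ _ inS notinS S0_gt1; rewrite ltnNge braid_nbhd_shift //.
    by left.
rewrite -density_le_potential ?braid_adjC // (setX_of_shift_closed shift_closed).
apply: braid_clique_union_density_le; apply/set0Pn.
by have [x xS0] := set0Pn _ S0n; exists x.1; apply: imset_f.
Qed.

End Braid.

Theorem proposition4p3 (t l r : nat) :
  (2 <= t)%N -> (2 <= l)%N -> (1 <= r <= l)%N -> (l < r * (r + 1))%N ->
  max_density (braid_adj l r t) = density_graph (braid_adj l r t).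
Proof.
move=> t_ge2 l_ge2 /andP[_ r_le_l] bridges.
apply: max_density_induced => [|S S_gt1].
  by rewrite card_prod !card_ord; nia.
rewrite density_le_potential ?braid_adjC ?braid_adj_irr //.
by apply: braid_potential_ge => //; [lia | rewrite -card_gt0; exact: ltnW].
Qed.
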